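(* Let $\mathbf{A}$ be a 5-dimensional LV algebra with natural basis $e_1,\dots,e_5$ such that $e_4e_j=\frac12(e_4+e_j)$ for $j=1,2,3,5$, and $e_ie_j\neq\frac12(e_i+e_j)$ for all distinct $i,j\in\{1,2,3,5\}$. Then $\mathrm{Der}(\mathbf{A})=\{0\}$.
   Context: Let $\mathbb{F}$ be a field of characteristic different from $2$. A Lotka–Volterra (LV) algebra of dimension $5$ over $\mathbb{F}$ is a commutative (not necessarily associative) $\mathbb{F}$-algebra $\mathbf{A}$ with a basis $e_1,\dots,e_5$ (the natural basis) such that $e_ie_j=\alpha_{ij}e_i+\alpha_{ji}e_j$ with $\alpha_{ij}\in\mathbb{F}$, $\alpha_{ii}=\frac12$ and $\alpha_{ij}+\alpha_{ji}=1$ for all $i,j$. A derivation is a linear map $D:\mathbf{A}\to\mathbf{A}$ with $D(uv)=D(u)v+uD(v)$ for all $u,v$; $\mathrm{Der}(\mathbf{A})$ is the set of derivations. *)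

From HB Require Import structures.
From mathcomp Require Import all_boot all_order all_algebra.
Set Implicit Arguments. Unset Strict Implicit. Unset Printing Implicit Defensive.
Import Order.TTheory GRing.Theory Num.Theory.
Local Open Scope ring_scope.

(* The natural basis e_1,...,e_5 of F^5, indexed 0..4 (e_{k+1} = lv_e k). *)
Definition lv_e (F : fieldType) (i : 'I_5) : 'rV[F]_5 := delta_mx 0 i.

Definition i4 : 'I_5 := @Ordinal 5 3 isT.

(* Structure constants a i j = alpha_{ij}: e_i e_j = a i j e_i + a j i e_j,
   with the product extended bilinearly. *)
Definition lvmul (F : fieldType) (a : 'I_5 -> 'I_5 -> F) (u v : 'rV[F]_5)
  : 'rV[F]_5 :=
  \sum_(i < 5) \sum_(j < 5)
     (u 0 i * v 0 j) *: (a i j *: lv_e F i + a j i *: lv_e F j).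

Definition is_LV (F : fieldType) (a : 'I_5 -> 'I_5 -> F) : Prop :=
  (forall i, a i i = 2^-1) /\ (forall i j, a i j + a j i = 1).

Definition is_derivation (F : fieldType) (a : 'I_5 -> 'I_5 -> F)
  (D : 'rV[F]_5 -> 'rV[F]_5) : Prop :=
  forall u v, D (lvmul a u v) = lvmul a (D u) v + lvmul a u (D v).

From HB Require Import structures.
From mathcomp Require Import all_boot all_order all_algebra ring zify.
Set Implicit Arguments. Unset Strict Implicit. Unset Printing Implicit Defensive.
Import Order.TTheory GRing.Theory Num.Theory.
Local Open Scope ring_scope.

(* Write [d i k] for the k-th coordinate of D e_i.  Comparing coordinates in
   D(e_i e_i) = 2 e_i D(e_i) shows that D e_i is supported on e_i and on the
   e_k with alpha_ki = 1/2; under the hypotheses this is {e_i, e_4} for i <> 4,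
   and everything for i = 4.  Comparing coordinates in D(e_i e_4) for a third
   index kills the off-diagonal part of D e_4, and the diagonal identity
   sum_l alpha_il d_il = 0 then kills d_44.  For i <> 4 the diagonal identity
   and the coordinate i' of D(e_i' e_i) (for some i' <> i, 4) give two linear
   equations in d_ii and d_i4 whose determinant is a multiple of
   alpha_i'i - 1/2 <> 0. *)

Lemma eq_of_sub_eq (R : zmodType) (l r x y : R) : x - y = l - r -> l = r -> x = y.
Proof. by move=> e lr; apply/eqP; rewrite -subr_eq0 e lr subrr. Qed.

Lemma exists_ord5_neq2 (x y : 'I_5) : exists i : 'I_5, i != x /\ i != y.
Proof.
have : (0 < #|~: [set x; y]|)%N.
  by have := cardsC [set x; y]; rewrite cards2 (card_ord 5); case: (x != y) => /=; lia.
by case/card_gt0P => i; rewrite !inE negb_or => /andP[]; exists i.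
Qed.

Lemma linear_row_eq0 (F : fieldType) n (V : lmodType F)
    (f : {linear 'rV[F]_n -> V}) :
  (forall i, f (delta_mx 0 i) = 0) -> forall u, f u = 0.
Proof.
move=> f0 u; rewrite (row_sum_delta u) linear_sum big1 // => i _.
by rewrite linearZ /= f0 scaler0.
Qed.

Section LVProduct.
Variables (F : fieldType) (a : 'I_5 -> 'I_5 -> F).

Lemma lv_eE (i k : 'I_5) : lv_e F i 0 k = (i == k)%:R.
Proof. by rewrite /lv_e mxE eqxx eq_sym. Qed.

Lemma lvmulC (u v : 'rV[F]_5) : lvmul a u v = lvmul a v u.
Proof.
rewrite /lvmul exchange_big; apply: eq_bigr => i _; apply: eq_bigr => j _.
by rewrite mulrC addrC.
Qed.

Lemma lvmul_e_coord (i : 'I_5) v k :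
  lvmul a (lv_e F i) v 0 k =
  (i == k)%:R * (\sum_j v 0 j * a i j) + v 0 k * a k i.
Proof.
rewrite /lvmul summxE.
under eq_bigr => i' _ do rewrite summxE.
under eq_bigr => i' _ do under eq_bigr => j _ do rewrite !mxE.
rewrite (bigD1 i) //= [X in _ + X]big1 ?addr0 => [|i' ne]; last first.
  by rewrite big1 // => j _; rewrite (negbTE ne) !mul0r.
under eq_bigr => j _ do rewrite eqxx mul1r mulrDr.
rewrite big_split /= mulr_sumr; congr (_ + _).
  apply: eq_bigr => j _; rewrite eq_sym.
  by case: (i == k); rewrite /= ?mulr1 ?mulr0 ?mul1r ?mul0r // mulrC.
rewrite (bigD1 k) //= big1 ?addr0 => [|j ne]; last by rewrite eq_sym (negbTE ne) !mulr0.
by rewrite eqxx mulr1.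
Qed.

Lemma lvmul_ee (i j : 'I_5) :
  lvmul a (lv_e F i) (lv_e F j) = a i j *: lv_e F i + a j i *: lv_e F j.
Proof.
apply/rowP => k; rewrite lvmul_e_coord (bigD1 j) //= big1 => [|l nl]; last first.
  by rewrite lv_eE eq_sym (negbTE nl) mul0r.
rewrite !mxE /= eqxx addr0 mul1r (eq_sym i k).
by case: (k == i); case: (k =P j) => [->|_];
  rewrite /= ?mulr1 ?mulr0 ?mul1r ?mul0r ?addr0 ?add0r // mulrC.
Qed.

Hypotheses (two_neq0 : (2%:R : F) != 0) (lvA : is_LV a).

Lemma half_add_half : (2^-1 : F) + 2^-1 = 1.
Proof. by field. Qed.

Lemma lvmul_ee_half (i j : 'I_5) : i != j ->
  (lvmul a (lv_e F i) (lv_e F j) == 2^-1 *: (lv_e F i + lv_e F j)) =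
  (a i j == 2^-1).
Proof.
move=> ij; rewrite lvmul_ee scalerDr; apply/eqP/eqP => [e | aij].
  have := congr1 (fun M : 'rV[F]_5 => M 0 i) e.
  by rewrite !mxE /= eqxx (negbTE ij) /= !mulr1 !mulr0 !addr0.
have aji : a j i = 2^-1.
  by apply: (@addrI _ (a i j)); rewrite lvA.2 aij half_add_half.
by rewrite aij aji.
Qed.

End LVProduct.

Section Derivation.
Variables (F : fieldType) (a : 'I_5 -> 'I_5 -> F).
Hypotheses (two_neq0 : (2%:R : F) != 0) (lvA : is_LV a).
Variable D : {linear 'rV[F]_5 -> 'rV[F]_5}.
Hypothesis derD : is_derivation a D.

Local Notation d i k := (D (lv_e F i) 0 k).

Lemma derivation_coordE i j k :
  a i j * d i k + a j i * d j k =
  (j == k)%:R * (\sum_l d i l * a j l) + d i k * a k j +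
  ((i == k)%:R * (\sum_l d j l * a i l) + d j k * a k i).
Proof.
have := congr1 (fun M : 'rV[F]_5 => M 0 k) (derD (lv_e F i) (lv_e F j)).
by rewrite lvmul_ee linearD !linearZ /= [lvmul a (D _) _]lvmulC !mxE !lvmul_e_coord.
Qed.

Lemma derivation_coord_eq0 i k : i != k -> a k i != 2^-1 -> d i k = 0.
Proof.
move=> ik aki; have c_neq0 : (2^-1 - a k i) * 2%:R != 0.
  by rewrite mulf_neq0 // subr_eq0 eq_sym.
apply: (mulIf c_neq0); rewrite mul0r.
apply: (eq_of_sub_eq _ (derivation_coordE i i k)).
by rewrite (negbTE ik) lvA.1 /=; ring.
Qed.

Lemma derivation_coord_distinct i j k : i != j -> i != k -> j != k ->
  (a i j - a k j) * d i k + (a j i - a k i) * d j k = 0.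
Proof.
move=> ij ik jk; apply: (eq_of_sub_eq _ (derivation_coordE i j k)).
by rewrite (negbTE ik) (negbTE jk) /=; ring.
Qed.

Lemma derivation_diag_sum i : \sum_l d i l * a i l = 0.
Proof.
have c_neq0 : - (2%:R : F) != 0 by rewrite oppr_eq0.
apply: (mulIf c_neq0); rewrite mul0r.
apply: (eq_of_sub_eq _ (derivation_coordE i i i)).
by rewrite eqxx lvA.1 /=; ring.
Qed.

Lemma derivation_offdiag_sum i j : i != j ->
  \sum_l d j l * a i l = (a j i - 2^-1) * d j i.
Proof.
move=> ij; apply: (eq_of_sub_eq _ (esym (derivation_coordE i j i))).
by rewrite eqxx eq_sym (negbTE ij) lvA.1 /=; ring.
Qed.

End Derivation.

Section HalfE4.
Variables (F : fieldType) (a : 'I_5 -> 'I_5 -> F).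
Hypotheses (two_neq0 : (2%:R : F) != 0) (lvA : is_LV a).
Hypothesis half_i4 : forall j, a i4 j = 2^-1.
Hypothesis not_half :
  forall i j, i != i4 -> j != i4 -> i != j -> a i j != 2^-1.
Variable D : {linear 'rV[F]_5 -> 'rV[F]_5}.
Hypothesis derD : is_derivation a D.

Local Notation d i k := (D (lv_e F i) 0 k).

Lemma half_to_i4 j : a j i4 = 2^-1.
Proof. by apply: (@addrI _ (a i4 j)); rewrite lvA.2 half_i4 half_add_half. Qed.

Lemma half_neq0 : (2^-1 : F) != 0.
Proof. by rewrite invr_eq0. Qed.

Lemma coord_i4_offdiag k : k != i4 -> d i4 k = 0.
Proof.
move=> k4; have [i [ik i4']] := exists_ord5_neq2 k i4.
have aki : a k i != 2^-1 by apply: not_half; rewrite // eq_sym.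
have := derivation_coord_distinct derD i4' ik; rewrite eq_sym => /(_ k4).
rewrite half_i4 !half_to_i4 subrr mul0r add0r => /eqP.
by rewrite mulf_eq0 subr_eq0 eq_sym (negbTE aki) => /eqP.
Qed.

Lemma coord_i4_diag : d i4 i4 = 0.
Proof.
have := derivation_diag_sum two_neq0 lvA derD i4.
rewrite (bigD1 i4) //= big1 ?addr0 => [|l l4]; last by rewrite coord_i4_offdiag ?mul0r.
by rewrite half_i4 => /eqP; rewrite mulf_eq0 (negbTE half_neq0) orbF => /eqP.
Qed.

Section OtherBasisVector.
Variables (j : 'I_5) (j4 : j != i4).

Lemma coord_offsupport l : l != j -> l != i4 -> d j l = 0.
Proof.
move=> lj l4; apply: (derivation_coord_eq0 two_neq0 lvA derD); first by rewrite eq_sym.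
exact: not_half.
Qed.

Lemma sum_coord_other (c : 'I_5 -> F) :
  \sum_l d j l * c l = d j j * c j + d j i4 * c i4.
Proof.
rewrite (bigD1 j) //= (bigD1 i4) 1?eq_sym //= big1 ?addr0 // => l /andP[lj l4].
by rewrite coord_offsupport ?mul0r.
Qed.

Lemma coord_diag_other : d j j = 0.
Proof.
have [i [ij i4']] := exists_ord5_neq2 j i4.
have diag := derivation_diag_sum two_neq0 lvA derD j.
have off := derivation_offdiag_sum lvA derD ij.
rewrite !sum_coord_other in diag off.
rewrite (coord_offsupport ij i4') mulr0 in off.
have : d j j * (a i j - 2^-1) = 0.
  by rewrite -[RHS](subrr 0) -{1}off -diag (lvA.1 j) !half_to_i4; ring.
by move/eqP; rewrite mulf_eq0 subr_eq0 (negbTE (not_half i4' j4 ij)) orbF => /eqP.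
Qed.

Lemma coord_other_i4 : d j i4 = 0.
Proof.
have := derivation_diag_sum two_neq0 lvA derD j.
rewrite sum_coord_other coord_diag_other mul0r add0r => /eqP.
by rewrite half_to_i4 mulf_eq0 (negbTE half_neq0) orbF => /eqP.
Qed.

End OtherBasisVector.

Lemma derivation_coord_eq0_half_i4 i k : d i k = 0.
Proof.
have [->|i4'] := eqVneq i i4.
  by have [->|k4] := eqVneq k i4; [exact: coord_i4_diag | exact: coord_i4_offdiag].
have [->|ki] := eqVneq k i; first exact: coord_diag_other.
have [->|k4] := eqVneq k i4; first exact: coord_other_i4.
exact: coord_offsupport.
Qed.

End HalfE4.

Theorem mainTheorem16 (F : fieldType) (a : 'I_5 -> 'I_5 -> F) :
  (2%:R : F) != 0 ->
  is_LV a ->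
  (forall j : 'I_5, j != i4 ->
     lvmul a (lv_e F i4) (lv_e F j) = 2^-1 *: (lv_e F i4 + lv_e F j)) ->
  (forall i j : 'I_5, i != i4 -> j != i4 -> i != j ->
     lvmul a (lv_e F i) (lv_e F j) != 2^-1 *: (lv_e F i + lv_e F j)) ->
  forall D : {linear 'rV[F]_5 -> 'rV[F]_5},
    is_derivation a D -> forall u, D u = 0.
Proof.
move=> two_neq0 lvA e4_half eij_not_half D derD.
have half_i4 j : a i4 j = 2^-1.
  have [->|j4] := eqVneq j i4; first exact: lvA.1.
  by apply/eqP; rewrite -lvmul_ee_half // 1?eq_sym // e4_half.
have not_half i j : i != i4 -> j != i4 -> i != j -> a i j != 2^-1.
  by move=> i4' j4 ij; rewrite -lvmul_ee_half // eij_not_half.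
apply: linear_row_eq0 => i; apply/rowP => k; rewrite mxE.
exact: (derivation_coord_eq0_half_i4 two_neq0 lvA half_i4 not_half derD).
Qed.
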